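(* Let $n$ be a positive integer such that $0.2n$, $0.45n$, $0.35n$ are integers. Consider the population of $n$ users consisting of $0.2n$ users with speech point $2$ and interval $[2,4]$, $0.45n$ users with speech point $3$ and interval $[2,3]$, and $0.35n$ users with speech point $4$ and interval $[3,4]$, all with participation threshold $\theta_i=2/3$, and no moderation window (no user banned). Then there is no stable set of users: for every $\mathcal S\subseteq[n]$, either some $i\in\mathcal S$ has negative utility with respect to $\mathcal S$ or some $j\notin\mathcal S$ has nonnegative utility with respect to $\mathcal S$.
   Context: For a set $\mathcal S$ of users on the platform, user $i$ (with interval $[l_i,r_i]$ and threshold $\theta_i$) has nonnegative utility with respect to $\mathcal S$ iff $|\{j\in\mathcal S\setminus\{i\}:p_j\in[l_i,r_i]\}|\ge\theta_i|\mathcal S\setminus\{i\}|$ (in particular utility is nonnegative when $\mathcal S\setminus\{i\}=\emptyset$), and negative otherwise. A set $\mathcal S$ is stable if all $i\in\mathcal S$ have nonnegative utility with respect to $\mathcal S$ and all $j\notin\mathcal S$ have negative utility with respect to $\mathcal S$. *)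

From mathcomp Require Import all_boot all_order all_algebra.
Set Implicit Arguments. Unset Strict Implicit. Unset Printing Implicit Defensive.
Import Order.TTheory GRing.Theory Num.Theory.
Local Open Scope ring_scope.

Definition others (n : nat) (S : {set 'I_n}) (i : 'I_n) : {set 'I_n} := S :\ i.

Definition nonneg_utility (n : nat) (p l r theta : 'I_n -> rat)
    (S : {set 'I_n}) (i : 'I_n) : bool :=
  theta i * (#|others S i|)%:R <=
    (#|[set j in others S i | (l i <= p j) && (p j <= r i)]|)%:R.

Definition stable (n : nat) (p l r theta : 'I_n -> rat) (S : {set 'I_n}) : Prop :=
  (forall i, i \in S -> nonneg_utility p l r theta S i) /\
  (forall j, j \notin S -> ~~ nonneg_utility p l r theta S j).

(* A user at point 2 approves everybody, so a stable set S contains all of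
   them; a user at point 3 approves exactly the members not at point 4, and a
   user at point 4 those not at point 2.  With threshold 2/3, having a
   point-3 user inside S and having one outside S impose incompatible linear
   bounds on y = #|S at point 3| and z = #|S at point 4|, so y is 0 or 45% of
   n; likewise z is 0 or 35% of n, and each of the four remaining cases
   violates one of the bounds. *)
From mathcomp Require Import all_boot all_order all_algebra zify lra.
Import Order.TTheory GRing.Theory Num.Theory.
Local Open Scope ring_scope.
Set Implicit Arguments.
Unset Strict Implicit.
Unset Printing Implicit Defensive.

Definition audience (n : nat) (p l r : 'I_n -> rat) (i : 'I_n) : {set 'I_n} :=
  [set j | (l i <= p j) && (p j <= r i)].

Definition at_point (n : nat) (p : 'I_n -> rat) (k : rat) : {set 'I_n} :=
  [set j | p j == k].

Lemma two_thirds_leE (x y : nat) :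
  (2 / 3 * x%:R <= y%:R :> rat) = (2 * x <= 3 * y)%N.
Proof. by rewrite -(ler_nat rat) !natrM; apply/idP/idP => ?; lra. Qed.

Section TwoThirdsThreshold.

Variables (n : nat) (p l r theta : 'I_n -> rat).
Hypothesis theta_two_thirds : forall i, theta i = 2 / 3.
Hypothesis point_in_interval : forall i, (l i <= p i) && (p i <= r i).

Local Notation audience := (audience p l r).
Local Notation nonneg_utility := (nonneg_utility p l r theta).
Local Notation stable := (stable p l r theta).

Lemma nonneg_utility_cardE (S : {set 'I_n}) i :
  nonneg_utility S i =
  (2 * #|S :\ i| <= 3 * #|(S :\ i) :&: audience i|)%N.
Proof. by rewrite /nonneg_utility /others setIdE theta_two_thirds two_thirds_leE. Qed.

Lemma member_nonneg_utility (S : {set 'I_n}) i : i \in S ->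
  nonneg_utility S i = (2 * #|S| + 1 <= 3 * #|S :&: audience i|)%N.
Proof.
move=> iS; have iSA : i \in S :&: audience i by rewrite !inE iS point_in_interval.
have -> : #|S| = #|S :\ i|.+1 by rewrite (cardsD1 i S) iS.
have -> : #|S :&: audience i| = #|(S :\ i) :&: audience i|.+1.
  by rewrite setIDAC (cardsD1 i (S :&: _)) iSA.
rewrite nonneg_utility_cardE; move: #|S :\ i| #|(S :\ i) :&: _| => x y.
by apply/idP/idP => ?; lia.
Qed.

Lemma outsider_nonneg_utility (S : {set 'I_n}) i : i \notin S ->
  nonneg_utility S i = (2 * #|S| <= 3 * #|S :&: audience i|)%N.
Proof.
move=> iS; have iSA : i \notin S :&: audience i by rewrite inE (negbTE iS).
have -> : #|S| = #|S :\ i| by rewrite (cardsD1 i S) (negbTE iS).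
have -> : #|S :&: audience i| = #|(S :\ i) :&: audience i|.
  by rewrite setIDAC (cardsD1 i (S :&: _)) (negbTE iSA).
exact: nonneg_utility_cardE.
Qed.

Variables (S Q A : {set 'I_n}).
Hypothesis stableS : stable S.
Hypothesis audience_Q : {in Q, forall i, audience i = A}.

Lemma stable_member_bound : (0 < #|S :&: Q|)%N ->
  (2 * #|S| + 1 <= 3 * #|S :&: A|)%N.
Proof.
rewrite card_gt0 => /set0Pn [i]; rewrite inE => /andP [iS iQ].
by rewrite -(audience_Q iQ) -member_nonneg_utility //; apply: stableS.1.
Qed.

Lemma stable_outsider_bound : (#|S :&: Q| < #|Q|)%N ->
  (3 * #|S :&: A| < 2 * #|S|)%N.
Proof.
move=> ltSQ; have /subsetPn [i iQ iS] : ~~ (Q \subset S).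
  by apply: contraTN ltSQ => /setIidPr ->; rewrite ltnn.
rewrite ltnNge -(audience_Q iQ) -outsider_nonneg_utility //.
exact: stableS.2.
Qed.

End TwoThirdsThreshold.

Section ThreePointPopulation.

Variables (n : nat) (p l r : 'I_n -> rat).
Hypothesis user_types : forall i,
  [\/ p i = 2 /\ l i = 2 /\ r i = 4,
      p i = 3 /\ l i = 2 /\ r i = 3 |
      p i = 4 /\ l i = 3 /\ r i = 4].

Local Notation audience := (audience p l r).
Local Notation at_point := (at_point p).

Lemma point_in_own_interval i : (l i <= p i) && (p i <= r i).
Proof. by case: (user_types i) => [[-> [-> ->]]|[-> [-> ->]]|[-> [-> ->]]]. Qed.

Lemma audience_at_points :
  [/\ {in at_point 2, forall i, audience i = setT},
      {in at_point 3, forall i, audience i = ~: at_point 4} &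
      {in at_point 4, forall i, audience i = ~: at_point 2}].
Proof.
by split=> i; rewrite inE => /eqP pi; apply/setP => j; rewrite !inE;
  case: (user_types i) => [[+ [-> ->]]|[+ [-> ->]]|[+ [-> ->]]]; rewrite pi //;
  case: (user_types j) => [[-> _]|[-> _]|[-> _]].
Qed.

Lemma card_at_points (X : {set 'I_n}) :
  #|X| = (#|X :&: at_point 2| + #|X :&: at_point 3| + #|X :&: at_point 4|)%N.
Proof.
rewrite -(cardsID (at_point 2) X) -(cardsID (at_point 3) (X :\: _)) addnA.
congr (_ + _ + _)%N; apply: eq_card => j; rewrite !inE;
  by case: (user_types j) => [[-> _]|[-> _]|[-> _]]; rewrite ?andbT ?andbF.
Qed.

End ThreePointPopulation.

Theorem proposition12 (n : nat) (p l r theta : 'I_n -> rat) :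
  (0 < n)%N ->
  (* 0.2n, 0.45n, 0.35n are integers *)
  (exists a b c : nat, a%:R = (1/5 : rat) * n%:R /\ b%:R = (9/20 : rat) * n%:R /\
                        c%:R = (7/20 : rat) * n%:R) ->
  (forall i, theta i = 2/3) ->
  (forall i, [\/ p i = 2 /\ l i = 2 /\ r i = 4,
                 p i = 3 /\ l i = 2 /\ r i = 3 |
                 p i = 4 /\ l i = 3 /\ r i = 4]) ->
  #|[set i | p i == 2]|%:R = (1/5 : rat) * n%:R ->
  #|[set i | p i == 3]|%:R = (9/20 : rat) * n%:R ->
  #|[set i | p i == 4]|%:R = (7/20 : rat) * n%:R ->
  forall S : {set 'I_n}, ~ stable p l r theta S.
Proof.
move=> n_gt0 _ theta23 types share2 share3 share4 S stableS.
have e2 : (5 * #|at_point p 2| = n)%N.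
  by apply/eqP; rewrite -(eqr_nat rat) natrM share2; apply/eqP; lra.
have e3 : (20 * #|at_point p 3| = 9 * n)%N.
  by apply/eqP; rewrite -(eqr_nat rat) !natrM share3; apply/eqP; lra.
have e4 : (20 * #|at_point p 4| = 7 * n)%N.
  by apply/eqP; rewrite -(eqr_nat rat) !natrM share4; apply/eqP; lra.
have [aud2 aud3 aud4] := audience_at_points types.
have in_interval := point_in_own_interval types.
have out2 := stable_outsider_bound theta23 stableS aud2.
have in3 := stable_member_bound theta23 in_interval stableS aud3.
have out3 := stable_outsider_bound theta23 stableS aud3.
have in4 := stable_member_bound theta23 in_interval stableS aud4.
have out4 := stable_outsider_bound theta23 stableS aud4.
rewrite setIT in out2; rewrite -!setDE in in3 out3 in4 out4.
have split2 := cardsID (at_point p 2) S.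
have split4 := cardsID (at_point p 4) S.
have partition := card_at_points types S.
have le_at_point k : (#|S :&: at_point p k| <= #|at_point p k|)%N.
  exact/subset_leq_card/subsetIr.
move: (le_at_point 2) (le_at_point 3) (le_at_point 4).
lia.
Qed.
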